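(* Let $c=(c_1,\dots,c_{n-1})$ be a cubic coordinate of size $n$ and let $i\in[n-1]$ with $c_i\neq 0$. Let $c'$ be the $(n-1)$-tuple with $c'_i=0$ and $c'_j=c_j$ for all $j\neq i$. Then $c'$ is a cubic coordinate.
   Context: A Tamari diagram of size $n$ is a word $u=u_1\cdots u_n$ of integers with $0\leq u_i\leq n-i$ and $u_{i+j}\leq u_i-j$ for all $i\in[n]$, $0\leq j\leq u_i$. A dual Tamari diagram of size $n$ is a word $v$ of integers with $0\leq v_i\leq i-1$ and $v_{i-j}\leq v_i-j$ for all $i\in[n]$, $0\leq j\leq v_i$. $(u,v)$ is a Tamari interval diagram if moreover for all $1\leq i<j\leq n$ with $j-i\leq u_i$ one has $v_j<j-i$. A cubic coordinate of size $n$ is $c\in\mathbb{Z}^{n-1}$ such that $(u,v)$ with $u_i=\max(c_i,0)$ ($i\in[n-1]$), $u_n=0$, $v_1=0$, $v_i=|\min(c_{i-1},0)|$ ($2\leq i\leq n$) is a Tamari interval diagram. *)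

From mathcomp Require Import all_boot all_order all_algebra.
Set Implicit Arguments. Unset Strict Implicit. Unset Printing Implicit Defensive.
Import Order.TTheory GRing.Theory Num.Theory.

(* Words are 1-indexed: a word w of size n is a function nat -> nat,
   only the values w 1, ..., w n matter. *)

Definition tamari_diagram (n : nat) (u : nat -> nat) : Prop :=
  forall i, 1 <= i <= n ->
    (u i <= n - i)%N /\ (forall j, j <= u i -> u (i + j) <= u i - j)%N.

Definition dual_tamari_diagram (n : nat) (v : nat -> nat) : Prop :=
  forall i, 1 <= i <= n ->
    (v i <= i - 1)%N /\ (forall j, j <= v i -> v (i - j) <= v i - j)%N.

Definition tamari_interval_diagram (n : nat) (u v : nat -> nat) : Prop :=
  [/\ tamari_diagram n u, dual_tamari_diagram n v &
      forall i j, 1 <= i -> i < j -> j <= n -> (j - i <= u i)%N -> (v j < j - i)%N].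

Definition cubic_entry (c : seq int) (i : nat) : int := nth 0%R c i.-1.

Definition cubic_u (n : nat) (c : seq int) (i : nat) : nat :=
  if (i < n)%N then `|Num.max (cubic_entry c i) 0%R|%N else 0%N.

Definition cubic_v (c : seq int) (i : nat) : nat :=
  if i == 1%N then 0%N else `|Num.min (cubic_entry c i.-1) 0%R|%N.

Definition cubic_coordinate (n : nat) (c : seq int) : Prop :=
  size c = n.-1 /\ tamari_interval_diagram n (cubic_u n c) (cubic_v c).

From mathcomp Require Import all_boot all_order all_algebra.

(* Setting c_i to 0 replaces some values of the words u and v of c by 0 and
   leaves the others unchanged. Every condition defining a Tamari interval
   diagram survives such a replacement: an entry that becomes 0 only weakens
   the constraints it imposes (j <= 0 forces j = 0), and the constrained
   entries can only decrease. *)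

Definition zeroing_of (w w' : nat -> nat) : Prop :=
  forall k, w' k = w k \/ w' k = 0%N.

Lemma zeroing_of_leq {w w' : nat -> nat} : zeroing_of w w' -> forall k, (w' k <= w k)%N.
Proof. by move=> zw k; case: (zw k) => ->. Qed.

Section Zeroing.

Variables (n : nat) (u u' v v' : nat -> nat).
Hypotheses (zu : zeroing_of u u') (zv : zeroing_of v v').

Lemma tamari_diagram_zeroing : tamari_diagram n u -> tamari_diagram n u'.
Proof.
move=> tu k /tu [le_u le_shift]; split; first exact: leq_trans (zeroing_of_leq zu k) le_u.
move=> j; case: (zu k) => E; rewrite E.
  by move=> le_j; apply: leq_trans (zeroing_of_leq zu _) (le_shift j le_j).
by rewrite leqn0 => /eqP ->; rewrite addn0 E.
Qed.

Lemma dual_tamari_diagram_zeroing : dual_tamari_diagram n v -> dual_tamari_diagram n v'.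
Proof.
move=> tv k /tv [le_v le_shift]; split; first exact: leq_trans (zeroing_of_leq zv k) le_v.
move=> j; case: (zv k) => E; rewrite E.
  by move=> le_j; apply: leq_trans (zeroing_of_leq zv _) (le_shift j le_j).
by rewrite leqn0 => /eqP ->; rewrite subn0 E.
Qed.

Lemma tamari_interval_diagram_zeroing :
  tamari_interval_diagram n u v -> tamari_interval_diagram n u' v'.
Proof.
move=> [tu tv compat]; split.
- exact: tamari_diagram_zeroing.
- exact: dual_tamari_diagram_zeroing.
- move=> a b le1a lt_ab le_bn le_u; apply: leq_ltn_trans (zeroing_of_leq zv b) _.
  exact: compat le1a lt_ab le_bn (leq_trans le_u (zeroing_of_leq zu a)).
Qed.

End Zeroing.

Lemma cubic_entry_set_nth0 (c : seq int) (m k : nat) :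
  cubic_entry (set_nth 0%R c m 0%R) k = cubic_entry c k \/
  cubic_entry (set_nth 0%R c m 0%R) k = 0%R.
Proof. by rewrite /cubic_entry nth_set_nth /=; case: ifP; [right | left]. Qed.

Lemma cubic_u_set_nth0 (n : nat) (c : seq int) (m : nat) :
  zeroing_of (cubic_u n c) (cubic_u n (set_nth 0%R c m 0%R)).
Proof.
move=> k; rewrite /cubic_u; case: ifP => _; last by left.
by case: (cubic_entry_set_nth0 c m k) => ->; [left | right].
Qed.

Lemma cubic_v_set_nth0 (c : seq int) (m : nat) :
  zeroing_of (cubic_v c) (cubic_v (set_nth 0%R c m 0%R)).
Proof.
move=> k; rewrite /cubic_v; case: ifP => _; first by left.
by case: (cubic_entry_set_nth0 c m k.-1) => ->; [left | right].
Qed.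

Theorem lemma2p3 (n : nat) (c : seq int) (i : nat) :
  cubic_coordinate n c -> (1 <= i <= n.-1)%N -> cubic_entry c i != 0%R ->
  cubic_coordinate n (seq.set_nth 0%R c i.-1 0%R).
Proof.
move=> [size_c tid_c] /andP [le1i le_in] _; split.
  rewrite size_set_nth size_c; apply/maxn_idPr.
  by rewrite prednK // (leq_trans le1i le_in).
exact: tamari_interval_diagram_zeroing (cubic_u_set_nth0 _ _ _)
                                       (cubic_v_set_nth0 _ _) tid_c.
Qed.
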